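(* Let $(X_i)_{i\in I}$ be a family of zero-dimensional coherent domains and $F\subseteq\prod_{i\in I}\mathcal V_{\le1}(X_i)\subseteq\prod_{i\in I}\mathcal V(X_i)$ a finite set. Then $\overline{\mathrm{conv}\,F}={\downarrow}\mathrm{conv}\,F$; in particular $b(F)={\downarrow}\mathrm{conv}\,F\cap{\uparrow}\mathrm{conv}\,F$.
   Context: A domain is a continuous dcpo; coherent means the intersection of two compact saturated subsets is compact; zero-dimensional means the Scott topology has a basis of clopens. $\mathcal V(X)$ is the set of continuous valuations on $X$ (strict, monotone, modular maps from Scott-opens to $[0,\infty]$ preserving directed unions), ordered pointwise, with pointwise addition and scaling; $\mathcal V_{\le1}(X)$ those with $\mu(X)\le1$. Products carry the componentwise order and operations. $\mathrm{conv}\,F$ is the set of finite convex combinations of elements of $F$, $\overline{A}$ the Scott closure, ${\downarrow}A$, ${\uparrow}A$ down- and up-closures, and $b(F)=\overline{\mathrm{conv}\,F}\cap{\uparrow}\mathrm{conv}\,F$. *)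

From HB Require Import structures.
From mathcomp Require Import all_boot all_order all_algebra.
From mathcomp Require Import boolp classical_sets functions cardinality reals constructive_ereal ereal.
Set Implicit Arguments. Unset Strict Implicit. Unset Printing Implicit Defensive.
Import Order.TTheory GRing.Theory Num.Theory.
Local Open Scope classical_set_scope.
Local Open Scope ring_scope.

(* list membership without an eqType *)
Fixpoint inseq {A : Type} (a : A) (s : seq A) : Prop :=
  if s is b :: s' then b = a \/ inseq a s' else False.

Section OrderTheory.
Variables (T : Type) (le : T -> T -> Prop).

Definition partial_order : Prop :=
  [/\ forall x, le x x,
      forall x y z, le x y -> le y z -> le x z &
      forall x y, le x y -> le y x -> x = y].

Definition directed_in (S D : set T) : Prop :=
  [/\ D `<=` S, D !=set0 &
      forall x y, D x -> D y -> exists2 z, D z & le x z /\ le y z].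

Definition is_sup_in (S D : set T) (s : T) : Prop :=
  [/\ S s, forall d, D d -> le d s &
      forall u, S u -> (forall d, D d -> le d u) -> le s u].

Definition directed (D : set T) := directed_in setT D.
Definition is_sup (D : set T) (s : T) := is_sup_in setT D s.

Definition dcpo : Prop :=
  partial_order /\ forall D, directed D -> exists s, is_sup D s.

Definition way_below (x y : T) : Prop :=
  forall D s, directed D -> is_sup D s -> le y s -> exists2 d, D d & le x d.

Definition domain : Prop :=
  dcpo /\ forall x, directed [set y | way_below y x] /\
                    is_sup [set y | way_below y x] x.

Definition scott_open (U : set T) : Prop :=
  (forall x y, U x -> le x y -> U y) /\
  (forall D s, directed D -> is_sup D s -> U s -> D `&` U !=set0).

Definition scott_compact (K : set T) : Prop :=
  forall (J : Type) (U : J -> set T), (forall j, scott_open (U j)) ->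
    K `<=` \bigcup_j U j ->
    exists s : seq J, K `<=` \bigcup_(j in [set j | inseq j s]) U j.

Definition saturated (A : set T) : Prop :=
  A = \bigcap_(U in [set U | scott_open U /\ A `<=` U]) U.

Definition coherent : Prop :=
  forall K1 K2, scott_compact K1 -> saturated K1 ->
                scott_compact K2 -> saturated K2 -> scott_compact (K1 `&` K2).

Definition scott_clopen (C : set T) : Prop := scott_open C /\ scott_open (~` C).

Definition scott_zero_dim : Prop :=
  forall U x, scott_open U -> U x -> exists2 C, scott_clopen C & C x /\ C `<=` U.

Definition scott_closed_in (S C : set T) : Prop :=
  [/\ C `<=` S,
      forall x c, S x -> C c -> le x c -> C x &
      forall D s, D `<=` C -> directed_in S D -> is_sup_in S D s -> C s].

Definition scott_closure_in (S A : set T) : set T :=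
  \bigcap_(C in [set C | scott_closed_in S C /\ A `<=` C]) C.

Definition down_in (S A : set T) : set T :=
  [set x | S x /\ exists2 a, A a & le x a].
Definition up_in (S A : set T) : set T :=
  [set x | S x /\ exists2 a, A a & le a x].

End OrderTheory.

Section Valuations.
Variables (R : realType) (X : Type) (le : X -> X -> Prop).

Definition sopen := {U : set X | scott_open le U}.

Definition valT := sopen -> \bar R.

Definition is_cval (mu : valT) : Prop :=
  [/\ forall U, (0 <= mu U)%E,
      forall U, sval U = set0 -> mu U = 0%E,
      forall U V, sval U `<=` sval V -> (mu U <= mu V)%E,
      forall U V W Z, sval W = sval U `|` sval V -> sval Z = sval U `&` sval V ->
                      (mu U + mu V = mu W + mu Z)%E &
      forall (J : Type) (D : J -> sopen) (W : sopen),
        (exists j : J, True) ->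
        (forall j k, exists l, sval (D j) `<=` sval (D l) /\ sval (D k) `<=` sval (D l)) ->
        sval W = \bigcup_j sval (D j) ->
        mu W = ereal_sup [set mu (D j) | j in [set: J]]].

Definition is_cval_le1 (mu : valT) : Prop :=
  is_cval mu /\ forall U : sopen, sval U = setT -> (mu U <= 1)%E.

End Valuations.

Unset Implicit Arguments.
Section Product.
Variables (R : realType) (I : Type) (X : I -> Type) (le : forall i, X i -> X i -> Prop).

Definition prodT := forall i, valT R (le i).

Definition prodV : set prodT := [set f | forall i, is_cval (f i)].
Definition prodV1 : set prodT := [set f | forall i, is_cval_le1 (f i)].

Definition vle (f g : prodT) : Prop := forall i U, (f i U <= g i U)%E.

Definition convcomb (n : nat) (r : 'I_n -> R) (f : 'I_n -> prodT) : prodT :=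
  fun i U => (\sum_(k < n) (r k)%:E * f k i U)%E.

Definition conv (F : set prodT) : set prodT :=
  [set g | exists n (r : 'I_n -> R) (f : 'I_n -> prodT),
     [/\ forall k, F (f k), forall k, 0 <= r k, \sum_(k < n) r k = 1 &
         g = convcomb n r f]].

Definition vclosure (A : set prodT) := scott_closure_in vle prodV A.
Definition vdown (A : set prodT) := down_in vle prodV A.
Definition vup (A : set prodT) := up_in vle prodV A.

Definition bF (F : set prodT) := vclosure (conv F) `&` vup (conv F).

End Product.

Arguments prodT R {I X} le.
Arguments prodV {R I X} le.
Arguments prodV1 {R I X} le.
Arguments vle {R I X le}.
Arguments convcomb {R I X le} n r f.
Arguments conv {R I X le} F.
Arguments vclosure {R I X le} A.
Arguments vdown {R I X le} A.
Arguments vup {R I X le} A.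
Arguments bF {R I X le} F.

From mathcomp Require Import all_boot all_order all_algebra.
From mathcomp Require Import boolp classical_sets functions cardinality reals constructive_ereal ereal.
From mathcomp Require Import topology normedtype.
Import Order.TTheory GRing.Theory Num.Theory numFieldNormedType.Exports.
Local Open Scope classical_set_scope.
Local Open Scope ring_scope.

(* The convex hull of a finite set F = {e_1, ..., e_n} of finite-valued points
   is the image of the standard simplex under r |-> sum_k r_k e_k.  Given a
   directed family below conv F, the sets of weights r with d <= sum_k r_k e_k,
   for d in the family, are nonempty, closed and form a filter base; by
   compactness of the simplex they have a common point c, and sum_k c_k e_k
   bounds the whole family.  Hence the down-closure of conv F is Scott closed and
   is the Scott closure of conv F.  That conv F lies in prod_i V(X_i) holds
   because finite weighted sums of reals commute with directed suprema. *)

Section ScottClosureOfDownset.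
Variables (T : Type) (le : T -> T -> Prop) (S A : set T).
Hypotheses (le_refl : forall x, le x x)
  (le_trans : forall x y z, le x y -> le y z -> le x z) (AS : A `<=` S).

Lemma down_in_scott_closed :
  (forall D, D `<=` down_in le S A -> directed_in le S D ->
     exists2 a, A a & forall d, D d -> le d a) ->
  scott_closed_in le S (down_in le S A).
Proof.
move=> ubA; split.
- by move=> x [].
- move=> x c Sx [_ [a Aa ca]] xc; split => //.
  by exists a => //; apply: le_trans xc ca.
- move=> D s Dsub Ddir [Ss _ s_least]; split => //.
  have [a Aa Da] := ubA D Dsub Ddir.
  by exists a => //; apply: s_least => //; apply: AS.
Qed.

Lemma scott_closure_in_down :
  scott_closed_in le S (down_in le S A) ->
  scott_closure_in le S A = down_in le S A.
Proof.
move=> downA_closed; apply/seteqP; split.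
- move=> x; apply; split => // a Aa.
  by split; [apply: AS | exists a].
- move=> x [Sx [a Aa xa]] C [[_ C_down _] AC].
  exact: C_down x a Sx (AC a Aa) xa.
Qed.

End ScottClosureOfDownset.

Lemma directed_family_ub {J T : Type} (D : J -> set T) (j0 : J) :
  (forall j k, exists l, D j `<=` D l /\ D k `<=` D l) ->
  forall n (jf : 'I_n -> J), exists l, forall k, D (jf k) `<=` D l.
Proof.
move=> Ddir; elim=> [|n IH] jf; first by exists j0; case.
have [l Hl] := IH (fun k => jf (lift ord0 k)).
have [l' [ll' j0l']] := Ddir l (jf ord0).
exists l' => k; case: (unliftP ord0 k) => [k'|] ->; last exact: j0l'.
by apply: subset_trans ll'; apply: Hl.
Qed.

Section Valuations.
Variables (R : realType) (X : Type) (le : X -> X -> Prop).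
Local Notation sopen := (sopen le).

Lemma scott_openT : scott_open le setT.
Proof. by split=> // D s [_ [d Dd] _] _ _; exists d. Qed.

Lemma cval_le1_fin_num (mu : valT R le) U : is_cval_le1 mu -> mu U \is a fin_num.
Proof.
case=> [[mu_ge0 _ mu_mono _ _] mu_le1].
pose T : sopen := exist _ setT scott_openT.
have : (mu U <= 1)%E by apply: le_trans (mu_mono U T (@subsetT _ _)) (mu_le1 T erefl).
by case: (mu U) (mu_ge0 U).
Qed.

Lemma is_cval_convex n (r : 'I_n -> R) (a : 'I_n -> sopen -> R) :
  (forall k, is_cval (fun U => (a k U)%:E)) ->
  (forall k, 0 <= r k) -> \sum_k r k = 1 ->
  is_cval (fun U => (\sum_k r k * a k U)%:E).
Proof.
move=> cva r_ge0 r_sum1.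
have a_ge0 k U : 0 <= a k U by case: (cva k) => /(_ U) + _ _ _ _; rewrite lee_fin.
have a_mono k U V : sval U `<=` sval V -> a k U <= a k V.
  by case: (cva k) => _ _ + _ _; rewrite -lee_fin; apply.
have wsum_mono U V : sval U `<=` sval V -> \sum_k r k * a k U <= \sum_k r k * a k V.
  by move=> UV; apply: ler_sum => k _; rewrite ler_wpM2l ?a_mono.
split.
- by move=> U; rewrite lee_fin sumr_ge0 // => k _; rewrite mulr_ge0.
- move=> U U0; congr (_%:E); rewrite big1 // => k _.
  have [_ + _ _ _] := cva k; move=> /(_ U U0) [->]; exact: mulr0.
- by move=> U V UV; rewrite lee_fin wsum_mono.
- move=> U V W Z HW HZ; rewrite -!EFinD -!big_split /=; congr (_%:E).
  apply: eq_bigr => k _; rewrite -!mulrDr; congr (_ * _).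
  by have [_ _ _ + _] := cva k; move=> /(_ U V W Z HW HZ) [].
move=> J D W [j0 _] Ddir HW; apply/eqP; rewrite eq_le; apply/andP; split; last first.
  apply: ge_ereal_sup => _ [j _ <-]; rewrite lee_fin wsum_mono // HW.
  by move=> x Djx; exists j.
apply/lee_addgt0Pr => e e0.
have approx k : exists j, a k W - e < a k (D j).
  have [_ _ _ _ /(_ J D W) a_sup] := cva k.
  have : ((a k W - e)%:E < ereal_sup [set (a k (D j))%:E | j in [set: J]])%E.
    by rewrite -a_sup ?lte_fin ?ltrBlDr ?ltrDl //; exists j0.
  by case/ereal_sup_gt => _ [j _ <-]; rewrite lte_fin; exists j.
have [jf jfP] := choice approx.
have [l Dl] := @directed_family_ub J X (fun j => sval (D j)) j0 Ddir _ jf.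
apply: (@le_trans _ _ ((\sum_k r k * a k (D l))%:E + e%:E)%E); last first.
  by rewrite leeD2r //; apply: ereal_sup_ubound; exists l.
rewrite -EFinD lee_fin -[e]mul1r -r_sum1 mulr_suml -big_split /=.
apply: ler_sum => k _; rewrite -mulrDr ler_wpM2l // -lerBlDr.
exact/ltW/(lt_le_trans (jfP k))/a_mono/Dl.
Qed.

End Valuations.

Section Simplex.
Variables (R : realType) (n : nat).
Local Notation W := {ptws 'I_n -> R}.

Definition simplex : set W := [set r | (forall k, 0 <= r k) /\ \sum_k r k = 1].

Lemma continuous_coord k : continuous (fun r : W => r k).
Proof. exact: (@proj_continuous _ (fun _ => R) k). Qed.

Lemma continuous_wsum (c : 'I_n -> R) : continuous (fun r : W => \sum_k r k * c k).
Proof.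
move=> r.
have := @cvg_big R 'I_n +%R 0 xpredT (@add_continuous R) W (nbhs r) (index_enum _)
  (fun k r => r k * c k) (fun k => r k * c k).
by apply=> // k _; apply: cvgMr_tmp; apply: continuous_coord.
Qed.

Lemma simplex_compact : compact simplex.
Proof.
have cube_compact : compact [set r : W | forall k, `[0, 1]%classic (r k)].
  by apply: (@tychonoff _ (fun=> R) (fun=> `[0, 1]%classic)) => k; exact: segment_compact.
apply: (subclosed_compact _ cube_compact); last first.
  move=> r [r_ge0 r_sum1] k /=; rewrite in_itv /= r_ge0 -r_sum1 (bigD1 k) //=.
  by rewrite lerDl sumr_ge0.
have -> : simplex = \bigcap_(k in setT) [set r : W | 0 <= r k] `&`
    (fun r : W => \sum_k r k * 1) @^-1` [set 1].
  apply/seteqP; split=> r [r_ge0 r_sum1] /=.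
    by under eq_bigr do rewrite mulr1; split=> // k _; apply: r_ge0.
  by move: r_sum1 => /=; under eq_bigr do rewrite mulr1; split=> // k; apply: r_ge0.
apply: closedI.
  apply: closed_bigI => k _.
  apply: (@preimage_closed _ _ (fun r : W => r k) [set y | 0 <= y]); last exact: closed_ge.
  by move=> r _; apply: continuous_coord.
apply: preimage_closed; last exact: closed_eq.
by move=> r _; apply: continuous_wsum.
Qed.

End Simplex.

Lemma closed_lee_EFin {T : topologicalType} {R : realType} (g : T -> R) (x : \bar R) :
  continuous g -> closed [set t | (x <= (g t)%:E)%E].
Proof.
move=> g_cont; case: x => [x| |].
- have -> : [set t | (x%:E <= (g t)%:E)%E] = g @^-1` [set y | x <= y].
    by apply/seteqP; split=> t /=; rewrite lee_fin.
  by apply: preimage_closed; [move=> t _; apply: g_cont | exact: closed_ge].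
- have -> : [set t | (+oo <= (g t)%:E)%E] = set0.
    by apply/seteqP; split=> t //=; rewrite leNgt ltry.
  exact: closed0.
- have -> : [set t | (-oo <= (g t)%:E)%E] = setT.
    by apply/seteqP; split=> t //= _; rewrite leNye.
  exact: closedT.
Qed.

Lemma finite_set_range {T : Type} (A : set T) :
  finite_set A -> exists n (e : 'I_n -> T), range e = A.
Proof.
case=> m /card_eqPle [+ _] => /pfcard_geP [-> | /surjfunPex [f Af]].
  exists 0%N, (fun k : 'I_0 => False_rect T (notF (ltn_ord k))).
  by apply/seteqP; split=> // x [k _ _]; have := ltn_ord k.
exists m, (fun k => f (val k)); apply/seteqP; split.
  by move=> _ [k _ <-]; rewrite Af; exists (val k) => //=; exact: ltn_ord.
by move=> x; rewrite Af => -[k km <-]; exists (Ordinal km).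
Qed.

Section ConvexHull.
Context {R : realType} {I : Type} {X : I -> Type} {le : forall i, X i -> X i -> Prop}.
Local Notation P := (prodT R le).

Lemma vle_refl (f : P) : vle f f.
Proof. by []. Qed.

Lemma vle_trans (f g h : P) : vle f g -> vle g h -> vle f h.
Proof. by move=> fg gh i U; apply: le_trans (fg i U) (gh i U). Qed.

Definition finite_valued (f : P) : Prop := forall i U, f i U \is a fin_num.

Lemma prodV1_finite_valued : prodV1 le `<=` finite_valued.
Proof. by move=> f f1 i U; apply: cval_le1_fin_num. Qed.

Lemma convcombE {n} (r : 'I_n -> R) (f : 'I_n -> P) : (forall k, finite_valued (f k)) ->
  forall i U, convcomb n r f i U = (\sum_k r k * fine (f k i U))%:E.
Proof.
move=> f_fin i U; rewrite /convcomb -sumEFin; apply: eq_bigr => k _.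
by rewrite EFinM fineK ?f_fin.
Qed.

Lemma conv_prodV (F : set P) : F `<=` prodV1 le -> conv F `<=` prodV le.
Proof.
move=> F1 _ [n [r [f [Ff r_ge0 r_sum1 ->]]]] i.
have f_fin k := prodV1_finite_valued _ (F1 _ (Ff k)).
rewrite (funext (convcombE r f f_fin i)).
apply: is_cval_convex => // k.
have [f_cval _] := F1 _ (Ff k) i.
suff -> : (fun U => (fine (f k i U))%:E) = f k i by [].
by apply: funext => U; rewrite fineK ?f_fin.
Qed.

Lemma conv_range_simplex {n} (e : 'I_n -> P) : (forall k, finite_valued (e k)) ->
  conv (range e) `<=` [set convcomb n r e | r in simplex R n].
Proof.
move=> e_fin _ [m [w [f [fe w_ge0 w_sum1 ->]]]].
have /choice [idx idxP] : forall k, exists j, e j = f k.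
  by move=> k; have [j _ ej] := fe k; exists j.
have f_fin k : finite_valued (f k) by rewrite -idxP.
exists (fun j => \sum_(k | idx k == j) w k).
  split=> [j|]; first exact: sumr_ge0.
  by rewrite -w_sum1 (partition_big idx xpredT).
apply: functional_extensionality_dep => i; apply: funext => U.
rewrite (convcombE _ _ e_fin) (convcombE _ _ f_fin); congr (_%:E).
rewrite (partition_big idx xpredT) //=; apply: eq_bigr => j _.
by rewrite mulr_suml; apply: eq_bigr => k /eqP <-; rewrite idxP.
Qed.

Definition dominating_weights {n} (e : 'I_n -> P) (d : P) : set {ptws 'I_n -> R} :=
  [set r | simplex R n r /\ vle d (convcomb n r e)].

Lemma dominating_weights_closed n (e : 'I_n -> P) (d : P) :
  (forall k, finite_valued (e k)) -> closed (dominating_weights e d).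
Proof.
move=> e_fin.
have -> : dominating_weights e d =
    simplex R n `&` \bigcap_(i in setT) \bigcap_(U in setT)
      [set r : {ptws 'I_n -> R} | (d i U <= (\sum_k r k * fine (e k i U))%:E)%E].
  apply/seteqP; split=> r /= [r_simplex r_dom]; split=> //.
    by move=> i _ U _ /=; rewrite -convcombE //; apply: r_dom.
  by move=> i U; rewrite convcombE //; apply: r_dom.
apply: closedI.
  exact: compact_closed (@hausdorff_product _ (fun=> R) (fun=> @Rhausdorff R))
    (simplex_compact R n).
by do 2![apply: closed_bigI => ? _]; apply/closed_lee_EFin/continuous_wsum.
Qed.

Lemma directed_below_conv_ub (F : set P) (D : set P) :
  finite_set F -> F `<=` finite_valued ->
  D `<=` vdown (conv F) -> directed_in vle (prodV le) D ->
  exists2 c, conv F c & forall d, D d -> vle d c.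
Proof.
move=> /finite_set_range [n [e <-]] Ffin Dbelow [_ D0 Ddir].
have e_fin k : finite_valued (e k) by apply: Ffin; exists k.
pose G := filter_from D (dominating_weights e).
have G_proper : ProperFilter G.
  apply: filter_from_proper; last first.
    move=> d Dd; have [_ [a Ca da]] := Dbelow d Dd.
    have [r r_simplex ra] := conv_range_simplex e e_fin _ Ca.
    by exists r; split=> //; rewrite ra.
  apply: filter_from_filter => [|d1 d2 Dd1 Dd2]; first by case: D0 => d; exists d.
  have [z Dz [d1z d2z]] := Ddir _ _ Dd1 Dd2.
  by exists z => // r [r_simplex zr]; split; split=> //; apply: vle_trans zr.
have G_simplex : G (simplex R n) by case: D0 => d Dd; exists d => // r [].
have [c [c_simplex c_cluster]] := simplex_compact R n _ G_proper G_simplex.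
exists (convcomb n c e); first by case: c_simplex => c_ge0 c_sum1; exists n, c, e.
move=> d Dd; suff [] : dominating_weights e d c by [].
by apply: dominating_weights_closed => // B Bc; apply: c_cluster => //; exists d.
Qed.

End ConvexHull.

Theorem mainTheorem16 (R : realType) (I : Type) (X : I -> Type)
    (le : forall i, X i -> X i -> Prop)
    (Hdom : forall i, domain (le i))
    (Hcoh : forall i, coherent (le i))
    (Hzd : forall i, scott_zero_dim (le i))
    (F : set (prodT R le))
    (Hfin : finite_set F)
    (HF : F `<=` prodV1 le) :
  vclosure (conv F) = vdown (conv F) /\
  bF F = vdown (conv F) `&` vup (conv F).
Proof.
have convF_prodV := conv_prodV F HF.
have F_fin := subset_trans HF prodV1_finite_valued.
have downF_closed : scott_closed_in vle (prodV le) (vdown (conv F)).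
  apply: down_in_scott_closed => //; first exact: vle_trans.
  by move=> D; apply: directed_below_conv_ub.
have closureF : vclosure (conv F) = vdown (conv F).
  by apply: scott_closure_in_down => //; exact: vle_refl.
by split=> //; rewrite /bF closureF.
Qed.
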